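(* For every integer $N\ge 0$, let $T_{2\times 3}(7,N)$ be the number of tilings of a $7\times n$ rectangle, $n=6N/7$, by $N$ tiles of size $2\times 3$ (and $0$ if $6N/7\notin\mathbb{Z}$). Then, as formal power series, \[ \sum_{N\ge 0} T_{2\times 3}(7,N)\,z^N=\frac{1}{1-3z^7}. \]
   Context: A tiling of an $m\times n$ rectangle (width $m$, length $n$, made of $mn$ unit squares) by $a\times b$ tiles is a partition of the rectangle into non-overlapping axis-parallel $a\times b$ rectangles with integer corner coordinates, each placed in either of its two orientations. Tilings related by reflections or rotations of the rectangle are counted as distinct. The empty tiling counts once for $N=0$. *)

From mathcomp Require Import all_boot.
Set Implicit Arguments. Unset Strict Implicit. Unset Printing Implicit Defensive.

(* A tile placement in the m x n rectangle (rows 'I_m = width m, columns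
   'I_n = length n): lower corner (x, y) and an orientation bit o. *)
Definition tile_dims (a b : nat) (o : bool) : nat * nat :=
  if o then (b, a) else (a, b).

Definition placement (m n : nat) := ('I_m * 'I_n * bool)%type.

(* the placed tile fits inside the rectangle; when a = b the two
   orientations coincide, so only orientation false is used *)
Definition valid_placement (m n a b : nat) (p : placement m n) : bool :=
  let: (x, y, o) := p in
  let: (h, w) := tile_dims a b o in
  [&& x + h <= m, y + w <= n & (a == b) ==> ~~ o].

Definition covers (m n a b : nat) (p : placement m n) (i : 'I_m) (j : 'I_n) : bool :=
  let: (x, y, o) := p in
  let: (h, w) := tile_dims a b o in
  [&& x <= i, i < x + h, y <= j & j < y + w].

Definition is_tiling (m n a b : nat) (S : {set placement m n}) : bool :=
  [forall p in S, valid_placement a b p] &&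
  [forall i : 'I_m, forall j : 'I_n, #|[set p in S | covers a b p i j]| == 1].

Definition ntilings (m n a b N : nat) : nat :=
  #|[set S : {set placement m n} | is_tiling a b S && (#|S| == N)]|.

Definition T_tilings (a b m N : nat) : nat :=
  if m %| a * b * N then ntilings m (a * b * N %/ m) a b N else 0.

From mathcomp Require Import all_boot zify.
Set Implicit Arguments. Unset Strict Implicit. Unset Printing Implicit Defensive.

(* In a tiling of a strip of height 7 by 2 x 3 tiles, the tiles covering its first
   six columns are forced: filling the first uncovered cell (in column-major order)
   in every possible way shows that they always form one of exactly three tilings of
   the 7 x 6 rectangle by 7 tiles.  Removing that block leaves a tiling of the rest
   of the strip, and conversely any of the three blocks can be put in front of such
   a tiling.  So the 7 x 6k rectangle has 3^k tilings, all with 7k tiles; and when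
   7 does not divide N, it does not divide 6N either. *)

Definition tile := (nat * nat * bool)%type.

Definition shift_tile (c : nat) (t : tile) : tile := (t.1.1, c + t.1.2, t.2).

Lemma shift_tile_inj c : injective (shift_tile c).
Proof. by move=> [[x y] o] [[x' y'] o'] [-> /addnI -> ->]. Qed.

Lemma colmajor_lt m x y i j :
  x < m -> (y < j) || (y == j) && (x < i) -> y * m + x < j * m + i.
Proof. by move=> xm /orP [yj | /andP [/eqP -> xi]]; nia. Qed.

Lemma cardsU_disjoint (T : finType) (A B : {set T}) :
  [disjoint A & B] -> #|A :|: B| = #|A| + #|B|.
Proof. by move=> AB; apply/eqP; rewrite (leq_card_setU A B).2. Qed.

Lemma mem_bigcup_seq (I : eqType) (T : finType) (r : seq I) (F : I -> {set T}) x :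
  (x \in \bigcup_(i <- r) F i) = has (fun i => x \in F i) r.
Proof. by elim: r => [|i r IH]; rewrite ?big_nil ?big_cons ?inE //= IH. Qed.

Lemma card_bigcup_seq (I : eqType) (T : finType) (r : seq I) (F : I -> {set T}) :
  pairwise (fun i j => [disjoint F i & F j]) r ->
  #|\bigcup_(i <- r) F i| = \sum_(i <- r) #|F i|.
Proof.
elim: r => [|i r IH]; first by rewrite !big_nil cards0.
rewrite pairwise_cons => /andP [/allP Fi_disj r_disj].
rewrite !big_cons cardsU_disjoint ?IH // disjoints_subset; apply/subsetP => x xi.
rewrite inE mem_bigcup_seq; apply/hasP => -[j jr xj].
by have := Fi_disj j jr; rewrite disjoints_subset => /subsetP/(_ x xi); rewrite inE xj.
Qed.

Section StripTilings.

Variables (m a b : nat).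
Hypotheses (a_gt0 : 0 < a) (b_gt0 : 0 < b).

Definition tile_height (o : bool) : nat := (tile_dims a b o).1.
Definition tile_width (o : bool) : nat := (tile_dims a b o).2.

Lemma tile_height_gt0 o : 0 < tile_height o.
Proof. by rewrite /tile_height; case: o. Qed.

Lemma tile_width_gt0 o : 0 < tile_width o.
Proof. by rewrite /tile_width; case: o. Qed.

Definition tile_covers (t : tile) (i j : nat) : bool :=
  let: (x, y, o) := t in
  [&& x <= i, i < x + tile_height o, y <= j & j < y + tile_width o].

Lemma tile_covers_shift c t i j :
  tile_covers (shift_tile c t) i (c + j) = tile_covers t i j.
Proof. by case: t => [[x y] o] /=; rewrite leq_add2l -addnA ltn_add2l. Qed.

Lemma tile_covers_corner x y o : tile_covers (x, y, o) x y.
Proof. by have := tile_height_gt0 o; have := tile_width_gt0 o; rewrite /=; lia. Qed.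

Definition tile_of n (p : placement m n) : tile :=
  (nat_of_ord p.1.1, nat_of_ord p.1.2, p.2).

Lemma tile_of_inj n : injective (@tile_of n).
Proof. by move=> [[x y] o] [[x' y'] o'] [/val_inj -> /val_inj -> ->]. Qed.

Lemma tile_of_onto n t : t.1.1 < m -> t.1.2 < n -> exists p : placement m n, tile_of p = t.
Proof. by case: t => [[x y] o] /= xm yn; exists (Ordinal xm, Ordinal yn, o). Qed.

Lemma covers_tile_of n (p : placement m n) i j :
  covers a b p i j = tile_covers (tile_of p) i j.
Proof. by case: p => [[x y] []]. Qed.

Lemma valid_placementE n (x : 'I_m) (y : 'I_n) o :
  valid_placement a b (x, y, o) =
  [&& x + tile_height o <= m, y + tile_width o <= n & (a == b) ==> ~~ o].
Proof. by case: o. Qed.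

Definition tiling_from n c (S : {set placement m n}) : bool :=
  [forall p in S, valid_placement a b p && (c <= p.1.2)] &&
  [forall i, forall j : 'I_n, #|[set p in S | covers a b p i j]| == (c <= j)].

Definition tilings_from n c N : {set {set placement m n}} :=
  [set S : {set placement m n} | tiling_from c S && (#|S| == N)].

Lemma tiling_fromP n c (S : {set placement m n}) :
  reflect ((forall p, p \in S -> valid_placement a b p && (c <= p.1.2)) /\
           (forall i j, #|[set p in S | covers a b p i j]| = (c <= j)))
          (tiling_from c S).
Proof.
apply: (iffP andP) => [[/forall_inP vS /forallP cS] | [vS cS]].
  by split=> // i j; apply/eqP; have /forallP := cS i; apply.
by split; [apply/forall_inP | apply/forallP => i; apply/forallP => j; rewrite cS].
Qed.

Definition occurs n (S : {set placement m n}) c (t : tile) : bool :=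
  [exists p in S, tile_of p == shift_tile c t].

Lemma occursP n (S : {set placement m n}) c t :
  reflect (exists2 p, p \in S & tile_of p = shift_tile c t) (occurs S c t).
Proof. by apply: (iffP exists_inP) => [[p pS /eqP] | [p pS e]]; exists p; rewrite ?e. Qed.

Definition covered (K : seq tile) (i j : nat) : bool := has (fun t => tile_covers t i j) K.

Definition first_gap (L : nat) (K : seq tile) : nat :=
  find (fun k => ~~ covered K (k %% m) (k %/ m)) (iota 0 (m * L)).

(* Two rectangles meet iff both contain the cell at the componentwise maximum
   of their lower corners. *)
Definition overlap (t u : tile) : bool :=
  let i := maxn t.1.1 u.1.1 in let j := maxn t.1.2 u.1.2 in
  tile_covers t i j && tile_covers u i j.

Definition can_place (K : seq tile) (t : tile) : bool :=
  (t.1.1 + tile_height t.2 <= m) && ~~ has (overlap t) K.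

(* Depth-first filling of the first L columns, always covering the first
   uncovered cell in column-major order; a branch that runs out of fuel returns
   its partial filling unchanged. *)
Fixpoint fillings (fuel L : nat) (K : seq tile) : seq (seq tile) :=
  if fuel is fuel'.+1 then
    let k := first_gap L K in
    let extend o := let t := (k %% m, k %/ m, o) in
                    if can_place K t then fillings fuel' L (t :: K) else [::] in
    if k < m * L then extend false ++ extend true else [:: K]
  else [:: K].

Lemma first_gapP L K (k := first_gap L K) : k < m * L ->
  ~~ covered K (k %% m) (k %/ m) /\ forall k', k' < k -> covered K (k' %% m) (k' %/ m).
Proof.
move=> gap_lt; split.
  have gap_ex : has (fun k => ~~ covered K (k %% m) (k %/ m)) (iota 0 (m * L)).
    by rewrite has_find size_iota.
  by have := nth_find 0 gap_ex; rewrite nth_iota.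
move=> k' lt_k'; have := before_find 0 lt_k'.
by rewrite nth_iota ?add0n => [/negbFE|]; last exact: ltn_trans gap_lt.
Qed.

Section SuffixTiling.

Variables (n c : nat) (S : {set placement m n}).
Hypothesis tiling_S : tiling_from c S.

Lemma tiling_from_fit (x : 'I_m) (y : 'I_n) o : (x, y, o) \in S ->
  [/\ x + tile_height o <= m, y + tile_width o <= n & c <= y].
Proof.
case/tiling_fromP: tiling_S => vS _ /vS.
by rewrite valid_placementE => /andP [/and3P []].
Qed.

Lemma tiling_from_covers_ex i j : i < m -> c <= j -> j < n ->
  exists2 p, p \in S & tile_covers (tile_of p) i j.
Proof.
case/tiling_fromP: tiling_S => _ cS im cj jn.
have := cS (Ordinal im) (Ordinal jn); rewrite /= cj => /eqP/cards1P [p /setP/(_ p)].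
by rewrite !inE eqxx covers_tile_of => /andP [pS cp]; exists p.
Qed.

Lemma tiling_from_covers_uniq p q i j : p \in S -> q \in S ->
  tile_covers (tile_of p) i j -> tile_covers (tile_of q) i j -> p = q.
Proof.
case: p => [[x y] o] pS qS cp cq.
have [xh yw _] := tiling_from_fit pS.
move: (cp); rewrite /= => /and4P [_ ih _ jw].
have im : i < m by lia.
have jn : j < n by lia.
case/tiling_fromP: tiling_S => _ /(_ (Ordinal im) (Ordinal jn)) cS.
have : #|[set p in S | covers a b p (Ordinal im) (Ordinal jn)]| <= 1.
  by rewrite cS; case: (c <= _).
by move/card_le1_eqP; apply; rewrite !inE covers_tile_of ?pS ?qS.
Qed.
Lemma occurs_covers_eq t q i j : occurs S c t -> q \in S ->
  tile_covers (shift_tile c t) i j -> tile_covers (tile_of q) i j ->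
  shift_tile c t = tile_of q.
Proof.
case/occursP => p pS <- qS cp cq.
by rewrite (tiling_from_covers_uniq pS qS cp cq).
Qed.


Lemma occurs_at_first_gap L K (k := first_gap L K) :
  c + L <= n -> all (occurs S c) K -> k < m * L ->
  exists o, occurs S c (k %% m, k %/ m, o).
Proof.
move=> cLn /allP KS gap_lt; have [gap before] := first_gapP gap_lt.
set i := k %% m in gap *; set j := k %/ m in gap *.
have ij_k : k = j * m + i := divn_eq k m.
have /andP [m_gt0 _] : (0 < m) && (0 < L) by rewrite -muln_gt0 (leq_ltn_trans _ gap_lt).
have im : i < m := ltn_pmod k m_gt0.
have jL : j < L by rewrite ltn_divLR // mulnC.
have cjn : c + j < n by lia.
have [[[x y] o] qS cq] := tiling_from_covers_ex im (leq_addr j c) cjn.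
have [xm _ cy] := tiling_from_fit qS.
move: (cq); rewrite /= => /and4P [xi ih yj jw].
suff /andP [/eqP ex /eqP ey] : ((x : nat) == i) && ((y : nat) == c + j).
  by exists o; apply/occursP; exists (x, y, o); rewrite // /tile_of /= ex ey.
(* otherwise the corner of the tile is an earlier, hence covered, cell *)
apply: contraT => corner_ne.
have /hasP [t tK ct] : covered K x (y - c).
  have := before ((y - c) * m + x); rewrite modnMDl modn_small // divnMDl // divn_small //.
  rewrite addn0; apply; rewrite [X in _ < X]ij_k; apply: colmajor_lt => //.
  by move: corner_ne; lia.
rewrite -(tile_covers_shift c) subnKC // in ct.
have := occurs_covers_eq (KS t tK) qS ct (tile_covers_corner _ _ _) => /= eq_t.
rewrite -(negbTE gap); apply/hasP; exists t => //.
by rewrite -(tile_covers_shift c) eq_t.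
Qed.

Lemma occurs_can_place K t : all (occurs S c) K ->
  ~~ covered K t.1.1 t.1.2 -> occurs S c t -> can_place K t.
Proof.
case: t => [[i j] o] /allP KS gap /occursP [q qS eq_t].
apply/andP; split.
  by case: q qS eq_t => [[x y] o'] qS [<- _ <-]; have [] := tiling_from_fit qS.
apply/hasP => -[u uK /andP [ct cu]].
rewrite -(tile_covers_shift c) -eq_t in ct; rewrite -(tile_covers_shift c) in cu.
have := occurs_covers_eq (KS u uK) qS cu ct; rewrite eq_t => /shift_tile_inj eq_u.
by move/hasP: gap; apply; exists u; rewrite // eq_u tile_covers_corner.
Qed.

Lemma fillings_cover fuel L K : c + L <= n -> all (occurs S c) K ->
  has (all (occurs S c)) (fillings fuel L K).
Proof.
move=> cLn; elim: fuel K => [|fuel IH] K KS /=; first by rewrite KS.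
case: ifP => [gap_lt | _]; last by rewrite /= KS.
have [o o_occ] := occurs_at_first_gap cLn KS gap_lt.
have [gap _] := first_gapP gap_lt.
have placeable := occurs_can_place (t := (_, _, o)) KS gap o_occ.
by rewrite has_cat; case: o placeable o_occ => /= -> o_occ; rewrite IH ?orbT //= o_occ.
Qed.

End SuffixTiling.

Definition in_strip n (t : tile) : bool := (t.1.1 < m) && (t.1.2 < n).

Definition tile_set n (s : seq tile) : {set placement m n} := [set p | tile_of p \in s].

Lemma card_tile_set n s : uniq s -> all (in_strip n) s -> #|tile_set n s| = size s.
Proof.
move=> s_uniq /allP s_strip; rewrite cardE -(size_map (@tile_of n)); apply: perm_size.
apply: uniq_perm => [|//|t]; first by rewrite map_inj_uniq ?enum_uniq //; apply: tile_of_inj.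
apply/mapP/idP => [[p] | ts]; first by rewrite mem_enum inE => ? ->.
have /andP [tm tn] := s_strip t ts; have [p ep] := tile_of_onto tm tn.
by exists p; rewrite ?mem_enum ?inE ?ep.
Qed.

Lemma card_tile_set_covers n s i j : uniq s -> all (in_strip n) s ->
  #|[set p in tile_set n s | covers a b p i j]| = count (fun t => tile_covers t i j) s.
Proof.
move=> s_uniq s_strip.
have -> : [set p in tile_set n s | covers a b p i j] =
          tile_set n [seq t <- s | tile_covers t i j].
  by apply/setP => p; rewrite !inE mem_filter covers_tile_of andbC.
rewrite card_tile_set ?size_filter ?filter_uniq //.
by apply/allP => t; rewrite mem_filter => /andP [_]; apply/allP.
Qed.

Definition placed_within (L : nat) (t : tile) : bool :=
  [&& t.1.1 + tile_height t.2 <= m, t.1.2 + tile_width t.2 <= L & (a == b) ==> ~~ t.2].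

Definition is_block (L : nat) (K : seq tile) : bool :=
  [&& all (placed_within L) K,
      all (fun j => all (fun i => count (fun t => tile_covers t i j) K == 1) (iota 0 m))
          (iota 0 L)
    & uniq K].

Definition block_at n c (K : seq tile) : {set placement m n} :=
  tile_set n (map (shift_tile c) K).

Lemma block_at_sub n c K (S : {set placement m n}) :
  all (occurs S c) K -> block_at n c K \subset S.
Proof.
move=> /allP KS; apply/subsetP => p; rewrite inE => /mapP [t /KS /occursP [q qS eq_q] eq_p].
by rewrite (tile_of_inj (etrans eq_p (esym eq_q))).
Qed.

Section Block.

Variables (L : nat) (K : seq tile).
Hypothesis K_block : is_block L K.

Lemma block_at_fit n c (x : 'I_m) (y : 'I_n) o : (x, y, o) \in block_at n c K ->
  [/\ x + tile_height o <= m, c <= y, y + tile_width o <= c + L & (a == b) ==> ~~ o].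
Proof.
case/and3P: K_block => /allP K_within _ _; rewrite inE => /mapP [[[x' y'] o'] tK [-> -> ->]].
by have /and3P [] := K_within _ tK; rewrite leq_addr -addnA leq_add2l.
Qed.

Variables (n c : nat).
Hypothesis cLn : c + L <= n.

Lemma block_at_in_strip : all (in_strip n) (map (shift_tile c) K).
Proof.
case/and3P: K_block => /allP K_within _ _; apply/allP => _ /mapP [[[x y] o] tK ->].
have /and3P [/= xh yw _] := K_within _ tK.
by have := tile_height_gt0 o; have := tile_width_gt0 o; rewrite /in_strip /=; lia.
Qed.

Lemma block_at_uniq : uniq (map (shift_tile c) K).
Proof. by case/and3P: K_block => _ _ K_uniq; rewrite map_inj_uniq //; apply: shift_tile_inj. Qed.

Lemma card_block_at : #|block_at n c K| = size K.
Proof. by rewrite card_tile_set ?size_map ?block_at_uniq ?block_at_in_strip. Qed.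

Lemma block_at_covers_count (i : 'I_m) (j : 'I_n) :
  #|[set p in block_at n c K | covers a b p i j]| = (c <= j < c + L).
Proof.
rewrite card_tile_set_covers ?block_at_uniq ?block_at_in_strip // count_map.
case/and3P: K_block => /allP K_within K_exact _.
have [cj | jc] := leqP c j; last first.
  by apply/eqP; rewrite -leqn0 leqNgt -has_count; apply/hasP => -[[[x y] o] _ /and4P []]; lia.
rewrite /= -ltn_subLR // (eq_count (a2 := fun t => tile_covers t i (j - c))) => [|t]; last first.
  by rewrite -(tile_covers_shift c) subnKC.
have [jL | Lj] := ltnP (j - c) L.
  have jL' : j - c \in iota 0 L by rewrite mem_iota add0n.
  have im : (i : nat) \in iota 0 m by rewrite mem_iota add0n ltn_ord.
  by move: K_exact => /allP/(_ _ jL')/allP/(_ _ im)/eqP.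
apply/eqP; rewrite -leqn0 leqNgt -has_count; apply/hasP => -[[[x y] o] tK /and4P [_ _ _]].
by have /and3P [_ /= yw _] := K_within _ tK; lia.
Qed.

Lemma block_at_disjoint N T : T \in tilings_from n (c + L) N -> [disjoint block_at n c K & T].
Proof.
rewrite inE => /andP [T_til _]; rewrite disjoints_subset.
apply/subsetP => -[[x y] o] pB; rewrite inE; apply/negP => pT.
have [_ _ yw _] := block_at_fit pB; have [_ _ cLy] := tiling_from_fit T_til pT.
by have := tile_width_gt0 o; lia.
Qed.

Lemma tiling_from_blockU N T : T \in tilings_from n (c + L) N ->
  block_at n c K :|: T \in tilings_from n c (size K + N).
Proof.
move=> /[dup] T_in; rewrite inE => /andP [T_til /eqP T_card].
have KT := block_at_disjoint T_in.
rewrite inE cardsU_disjoint // card_block_at T_card eqxx andbT.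
case/tiling_fromP: T_til => T_valid T_count.
apply/tiling_fromP; split=> [[[x y] o] | i j].
  rewrite inE => /orP [pB | /T_valid /andP [-> cLy]].
    by have [xh cy yw ab] := block_at_fit pB; rewrite valid_placementE xh ab cy andbT /=; lia.
  by rewrite /= (leq_trans (leq_addr L c) cLy).
rewrite setIdE setIUl cardsU_disjoint; last exact: disjointW (subsetIl _ _) (subsetIl _ _) KT.
rewrite -!setIdE block_at_covers_count T_count.
by case: (leqP c j); case: (leqP (c + L) j) => /=; lia.
Qed.

Lemma tiling_from_blockD N S : S \in tilings_from n c (size K + N) ->
  block_at n c K \subset S -> S :\: block_at n c K \in tilings_from n (c + L) N.
Proof.
rewrite inE => /andP [S_til /eqP S_card] KS.
rewrite inE cardsD (setIidPr KS) card_block_at S_card addKn eqxx andbT.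
case/tiling_fromP: (S_til) => S_valid S_count.
apply/tiling_fromP; split=> [[[x y] o] | i j].
  rewrite inE => /andP [pB pS]; have /andP [-> cy] := S_valid _ pS.
  rewrite /= leqNgt; apply: contra pB => ycL.
  (* the corner cell of the tile lies in the block, whose tile covering it must be this one *)
  have : #|[set p in block_at n c K | covers a b p x y]| == 1.
    by rewrite block_at_covers_count cy ycL.
  case/cards1P => q /setP/(_ q); rewrite in_set1 eqxx in_set covers_tile_of => /andP [qB cq].
  have := tiling_from_covers_uniq S_til pS (subsetP KS _ qB) (tile_covers_corner _ _ _) cq.
  by move=> ->.
rewrite setIdE setIDAC cardsD setIAC (setIidPr KS) -!setIdE.
rewrite block_at_covers_count S_count.
by case: (leqP c j); case: (leqP (c + L) j) => /=; lia.
Qed.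

End Block.

Lemma card_tilings_from_nil n : #|tilings_from n n 0| = 1.
Proof.
apply/eqP/cards1P; exists set0; apply/setP => S; rewrite !inE.
apply/andP/eqP => [[_ /eqP /cards0_eq] // | ->]; split; last by rewrite cards0.
apply/tiling_fromP; split=> [p | i j]; first by rewrite inE.
rewrite (_ : [set p in set0 | _] = set0) ?cards0 ?(leqNgt n) ?ltn_ord //.
by apply/setP => p; rewrite !inE.
Qed.

Lemma ntilings_tilings_from n N : ntilings m n a b N = #|tilings_from n 0 N|.
Proof.
rewrite /ntilings /tilings_from; congr #|pred_of_set _|; apply/setP => S; rewrite !inE.
by congr (_ && _); congr (_ && _); apply: eq_forallb => p; rewrite leq0n andbT.
Qed.

Section Recurrence.

Variables (L s : nat) (Ks : seq (seq tile)).
Hypotheses (Ks_block : all (is_block L) Ks) (Ks_size : all (fun K => size K == s) Ks).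
Hypothesis Ks_distinct : pairwise (fun K K' => ~~ all [in K'] K) Ks.
Hypothesis Ks_cover : forall n c (S : {set placement m n}),
  tiling_from c S -> c + L <= n -> has (all (occurs S c)) Ks.

Definition block_extensions n c N (K : seq tile) : {set {set placement m n}} :=
  [set block_at n c K :|: T | T in tilings_from n (c + L) N].

Lemma card_block_extensions n c N K : is_block L K -> c + L <= n ->
  #|block_extensions n c N K| = #|tilings_from n (c + L) N|.
Proof.
move=> K_block cLn; apply: card_in_imset => T T' T_in T'_in eq_TT'.
have unblock (X : {set placement m n}) :
    [disjoint X & block_at n c K] -> (block_at n c K :|: X) :\: block_at n c K = X.
  by move=> /setDidPl X_disj; rewrite setDUl setDv set0U X_disj.
rewrite -(unblock T) 1?disjoint_sym ?(block_at_disjoint K_block cLn T_in) // eq_TT' unblock //.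
by rewrite disjoint_sym (block_at_disjoint K_block cLn T'_in).
Qed.

Lemma block_extensions_disjoint n c N K K' :
  is_block L K -> c + L <= n -> ~~ all [in K'] K ->
  [disjoint block_extensions n c N K & block_extensions n c N K'].
Proof.
move=> K_block cLn /allPn [t tK tK'].
rewrite disjoints_subset; apply/subsetP => _ /imsetP [T T_in ->]; rewrite inE.
apply/imsetP => -[T' T'_in eq_T].
have /andP [tm tn] := allP (block_at_in_strip K_block cLn) _ (map_f (shift_tile c) tK).
have [p eq_p] := tile_of_onto tm tn.
have pK : p \in block_at n c K by rewrite inE eq_p map_f.
have : p \in block_at n c K' :|: T' by rewrite -eq_T inE pK.
rewrite inE (disjointFr (block_at_disjoint K_block cLn T'_in) pK) orbF inE eq_p.
by rewrite (mem_map (@shift_tile_inj c)) (negbTE tK').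
Qed.

Lemma tilings_from_blocks n c N : c + L <= n ->
  tilings_from n c (s + N) = \bigcup_(K <- Ks) block_extensions n c N K.
Proof.
move=> cLn; apply/setP => S; rewrite mem_bigcup_seq; apply/idP/hasP => [S_in | [K KKs]].
  have /andP [S_til _] : tiling_from c S && (#|S| == s + N) by rewrite inE in S_in.
  have /hasP [K KKs KS] := Ks_cover S_til cLn.
  have K_block := allP Ks_block K KKs; have /eqP K_size := allP Ks_size K KKs.
  have KS_sub := block_at_sub KS.
  exists K => //; apply/imsetP; exists (S :\: block_at n c K).
    by apply: tiling_from_blockD; rewrite ?K_size.
  by rewrite setDE setUIr setUCr setIT (setUidPr KS_sub).
case/imsetP => T T_in ->; have /eqP <- := allP Ks_size K KKs.
exact: (tiling_from_blockU (allP Ks_block K KKs) cLn T_in).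
Qed.

Lemma card_tilings_from_blocks n c N : c + L <= n ->
  #|tilings_from n c (s + N)| = size Ks * #|tilings_from n (c + L) N|.
Proof.
move=> cLn; rewrite tilings_from_blocks // card_bigcup_seq; last first.
  apply: (sub_in_pairwise _ Ks_block Ks_distinct) => K K' K_block _.
  exact: block_extensions_disjoint.
rewrite big_seq (eq_bigr (fun=> #|tilings_from n (c + L) N|)) => [|K KKs].
  by rewrite -big_seq big_const_seq count_predT iter_addn_0 mulnC.
exact: card_block_extensions (allP Ks_block K KKs) cLn.
Qed.

Lemma card_tilings_from_blocks_power k : #|tilings_from (L * k) 0 (s * k)| = size Ks ^ k.
Proof.
suff card_pow j c : c + L * j = L * k -> #|tilings_from (L * k) c (s * j)| = size Ks ^ j.
  exact: card_pow.
elim: j c => [|j IH] c; first by rewrite !muln0 addn0 => ->; apply: card_tilings_from_nil.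
rewrite !mulnS addnA => def_c.
by rewrite card_tilings_from_blocks ?IH ?expnS // -def_c leq_addr.
Qed.

End Recurrence.

End StripTilings.

Definition blocks_7x6 : seq (seq tile) := fillings 7 2 3 20 6 [::].

Lemma card_tilings_7x6k k : #|tilings_from 7 2 3 (6 * k) 0 (7 * k)| = 3 ^ k.
Proof.
have /and4P [blocks size7 distinct /eqP size3] :
  [&& all (is_block 7 2 3 6) blocks_7x6, all (fun K => size K == 7) blocks_7x6,
      pairwise (fun K K' => ~~ all [in K'] K) blocks_7x6 & size blocks_7x6 == 3].
  by vm_compute.
have := card_tilings_from_blocks_power (a := 2) (b := 3) isT isT blocks size7 distinct.
by rewrite size3; apply=> n c S S_til cLn; apply: fillings_cover.
Qed.

Theorem mainTheorem10 : forall N : nat,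
  T_tilings 2 3 7 N = (if 7 %| N then 3 ^ (N %/ 7) else 0).
Proof.
move=> N; rewrite /T_tilings Gauss_dvdr //.
have [/dvdnP [k ->] | //] := boolP (7 %| N).
rewrite mulnK // mulnA mulnK // ntilings_tilings_from (mulnC k).
exact: card_tilings_7x6k.
Qed.
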